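(* Let $g$ be a completely additive arithmetic function. Then for every positive integer $n$, $$(\Lambda_{Ld}\ast g)(n)=g(n)Ld(n)-\frac12\sum_{p^\alpha\parallel n}\frac{\alpha(\alpha+1)g(p)}{p}.$$
   Context: The arithmetic logarithmic derivative is $Ld(n)=\sum_{p^\alpha\parallel n}\frac{\alpha}{p}$ (sum over primes $p\mid n$, $\alpha$ the exact exponent of $p$ in $n$). $\Lambda_{Ld}(n)=\frac1p$ if $n=p^k$ for some prime $p$ and integer $k\geq1$, and $0$ otherwise. $g$ completely additive means $g(mn)=g(m)+g(n)$ for all positive integers $m,n$. $\ast$ is Dirichlet convolution. *)

From mathcomp Require Import all_boot all_order all_algebra.
Set Implicit Arguments. Unset Strict Implicit. Unset Printing Implicit Defensive.
Import Order.TTheory GRing.Theory Num.Theory.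
Local Open Scope ring_scope.

(* Arithmetic functions are functions nat -> R, only values at positive
   integers matter. *)

Definition dconv (R : comNzRingType) (f g : nat -> R) (n : nat) : R :=
  \sum_(d <- divisors n) f d * g (n %/ d)%N.

Definition Ld (R : fieldType) (n : nat) : R :=
  \sum_(p <- primes n) (logn p n)%:R / p%:R.

Definition is_prime_power (n : nat) : bool :=
  [exists p : 'I_n.+1, [exists k : 'I_n.+1,
     [&& prime p, (0 < k)%N & n == ((p : nat) ^ (k : nat))%N]]].

(* Lambda_Ld(n) = 1/p if n = p^k (p prime, k >= 1), 0 otherwise;
   for such n, p is the smallest prime divisor pdiv n. *)
Definition Lambda_Ld (R : fieldType) (n : nat) : R :=
  if is_prime_power n then (pdiv n)%:R^-1 else 0.

Definition completely_additive (R : zmodType) (g : nat -> R) : Prop :=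
  forall m n : nat, (0 < m)%N -> (0 < n)%N -> g (m * n)%N = g m + g n.

From mathcomp Require Import all_boot all_order all_algebra.
From mathcomp Require Import ring.

Set Implicit Arguments.
Unset Strict Implicit.
Unset Printing Implicit Defensive.
Import Order.TTheory GRing.Theory Num.Theory.
Local Open Scope ring_scope.

(* Since Lambda_Ld vanishes off prime powers, the convolution only runs over
   the divisors p^k of n, 1 <= k <= alpha_p, and there complete additivity
   gives g(n / p^k) = g(n) - k g(p).  Summing over k produces alpha_p g(n) / p
   and the triangular number alpha_p (alpha_p + 1) / 2 times g(p) / p. *)

Lemma is_prime_powerP (d : nat) :
  reflect (exists p k, [/\ prime p, (0 < k)%N & d = (p ^ k)%N])
          (is_prime_power d).
Proof.
apply: (iffP existsP) => [[p /existsP [k /and3P [pp k0 /eqP ->]]]|].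
  by exists p, k.
move=> [p [k [pp k0 ->]]].
have p_lt : (p < (p ^ k).+1)%N.
  by rewrite ltnS -{1}(expn1 p) (leq_pexp2l (prime_gt0 pp) k0).
have k_lt : (k < (p ^ k).+1)%N by rewrite ltnW // ltnS ltn_expl ?prime_gt1.
by exists (Ordinal p_lt); apply/existsP; exists (Ordinal k_lt); rewrite pp k0 /=.
Qed.

Lemma pfactor_inj (p q k j : nat) : prime p -> prime q ->
  (0 < k)%N -> (0 < j)%N -> (p ^ k)%N = (q ^ j)%N -> p = q /\ k = j.
Proof.
move=> pp pq; case: k => // k; case: j => // j _ _ e.
have pq_eq : p = q by rewrite -(pdiv_pfactor k pp) e pdiv_pfactor.
by move: e; rewrite pq_eq => /eqP; rewrite eqn_exp2l ?prime_gt1 // => /eqP.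
Qed.

Lemma perm_prime_power_divisors (n : nat) : (0 < n)%N ->
  perm_eq [seq d <- divisors n | is_prime_power d]
          [seq (p ^ k)%N | p <- primes n, k <- index_iota 1 (logn p n).+1].
Proof.
move=> n0; apply: uniq_perm.
- exact/filter_uniq/divisors_uniq.
- apply: allpairs_uniq_dep => [|p _|]; rewrite ?primes_uniq ?iota_uniq //.
  move=> [p k] [q j] /allpairsPdep [p' [k' [pn kp [-> ->]]]].
  move=> /allpairsPdep [q' [j' [qn jq [-> ->]]]] /= e.
  move: pn qn kp jq; rewrite !mem_primes !mem_index_iota.
  move=> /and3P [pp _ _] /and3P [qp _ _] /andP [k0 _] /andP [j0 _].
  by have [-> ->] := pfactor_inj pp qp k0 j0 e.
move=> d; rewrite mem_filter -dvdn_divisors //; apply/andP/allpairsPdep.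
  move=> [/is_prime_powerP [p [k [pp k0 ->]]] dvd_n].
  have pn : p \in primes n.
    by rewrite mem_primes pp n0 (dvdn_trans _ dvd_n) // dvdn_exp.
  exists p, k; split=> //.
  by rewrite mem_index_iota k0 ltnS -pfactor_dvdn.
move=> [p [k [pn]]]; rewrite mem_index_iota => /andP [k0 k_le] ->.
have pp : prime p by move: pn; rewrite mem_primes => /andP [].
split; first by apply/is_prime_powerP; exists p, k.
by rewrite pfactor_dvdn.
Qed.

Lemma big_divisors_prime_power (R : nmodType) (F : nat -> R) (n : nat) :
  (0 < n)%N -> (forall d, ~~ is_prime_power d -> F d = 0) ->
  \sum_(d <- divisors n) F d =
    \sum_(p <- primes n) \sum_(1 <= k < (logn p n).+1) F (p ^ k)%N.
Proof.
move=> n0 F0; rewrite -big_allpairs_dep.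
rewrite -(perm_big _ (perm_prime_power_divisors n0)) big_filter [RHS]big_mkcond /=.
by apply: eq_bigr => d _; case: ifP => // /negbT /F0.
Qed.

Lemma dconv_prime_power_support (R : comNzRingType) (f g : nat -> R) (n : nat) :
  (0 < n)%N -> (forall d, ~~ is_prime_power d -> f d = 0) ->
  dconv f g n =
    \sum_(p <- primes n) \sum_(1 <= k < (logn p n).+1)
      f (p ^ k)%N * g (n %/ p ^ k)%N.
Proof.
move=> n0 f0; rewrite /dconv.
rewrite (@big_divisors_prime_power _ (fun d => f d * g (n %/ d)%N)) //.
by move=> d /f0 ->; rewrite mul0r.
Qed.

Lemma Lambda_Ld_pfactor (R : fieldType) (p k : nat) : prime p -> (0 < k)%N ->
  Lambda_Ld R (p ^ k) = p%:R^-1.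
Proof.
move=> pp k0.
have ppk : is_prime_power (p ^ k) by apply/is_prime_powerP; exists p, k.
rewrite /Lambda_Ld ppk.
by case: k k0 {ppk} => // k _; rewrite pdiv_pfactor.
Qed.

Section CompletelyAdditive.

Variables (R : zmodType) (g : nat -> R).
Hypothesis g_add : completely_additive g.

Lemma completely_additive1 : g 1%N = 0.
Proof. by apply: (addrI (g 1%N)); rewrite addr0 -g_add. Qed.

Lemma completely_additive_expn (p k : nat) : (0 < p)%N ->
  g (p ^ k)%N = g p *+ k.
Proof.
move=> p0; elim: k => [|k IH]; first exact: completely_additive1.
by rewrite expnS g_add ?expn_gt0 ?p0 // IH mulrS.
Qed.

Lemma completely_additive_divn (n d : nat) : (0 < n)%N -> (d %| n)%N ->
  g (n %/ d)%N = g n - g d.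
Proof.
move=> n0 dvd_n; have d0 : (0 < d)%N by apply: dvdn_gt0 dvd_n.
rewrite -{2}(divnK dvd_n) g_add ?addrK //.
by rewrite divn_gt0 // dvdn_leq.
Qed.

End CompletelyAdditive.

Lemma double_triangular_sum (a : nat) :
  (2 * \sum_(1 <= k < a.+1) k = a * a.+1)%N.
Proof.
elim: a => [|a IH]; first by rewrite big_geq.
by rewrite big_nat_recr //= mulnDr IH -mulnDl addn2 mulnC.
Qed.

Lemma sum_arithmetic_progression (R : numFieldType) (x y : R) (a : nat) :
  \sum_(1 <= k < a.+1) (x - y *+ k) = x *+ a - 2%:R^-1 * (a * a.+1)%:R * y.
Proof.
rewrite sumrB sumr_const_nat subn1 sumrMnr -(double_triangular_sum a) natrM.
by rewrite mulKf ?pnatr_eq0 // mulr_natl.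
Qed.

Theorem theorem3p2 (R : realFieldType) (g : nat -> R) :
  completely_additive g ->
  forall n : nat, (0 < n)%N ->
    dconv (@Lambda_Ld R) g n =
      g n * Ld R n -
      2%:R^-1 * \sum_(p <- primes n)
                  ((logn p n * (logn p n).+1)%:R * g p / p%:R).
Proof.
move=> g_add n n0.
have Lambda_off d : ~~ is_prime_power d -> Lambda_Ld R d = 0.
  by move=> /negbTE pp_d; rewrite /Lambda_Ld pp_d.
rewrite dconv_prime_power_support //.
rewrite /Ld big_distrr big_distrr -sumrB /=; apply: eq_big_seq => p pn.
have pp : prime p by move: pn; rewrite mem_primes => /andP [].
rewrite big_nat_cond (eq_bigr (fun k => p%:R^-1 * (g n - g p *+ k))); last first.
  move=> k; rewrite andbT => /andP [k0 k_le].
  rewrite Lambda_Ld_pfactor // completely_additive_divn ?pfactor_dvdn //.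
  by rewrite completely_additive_expn ?prime_gt0.
rewrite -big_nat_cond -big_distrr /= sum_arithmetic_progression.
by rewrite -[g n *+ _]mulr_natr; ring.
Qed.
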